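(* Assume $F$ is coercive over the set $\{(\mathbf{W},\mathbf{z},\mathbf{a},\mathbf{b}) : h_l(z_l)-\epsilon\le a_l\le h_l(z_l)+\epsilon,\ l=1,\dots,L-1\}$. For the TIAM iterates described in the context, let $M>0$ be a Lipschitz constant of $\nabla\phi$ (gradient with respect to $(a,W,z,b)$) on a bounded set containing all iterates and their extrapolations, and set $C_1=\max(M,M+\theta_1^{k+1},\dots,M+\theta_L^{k+1})$. Then for every $k\in\mathbb{N}$ there exists $g_1^{k+1}\in\partial_{\mathbf{W}^{k+1}}F$ such that $\|g_1^{k+1}\|\le C_1\big(\|\mathbf{W}^{k+1}-\mathbf{W}^k\|+\|\mathbf{z}^{k+1}-\mathbf{z}^k\|+\|\mathbf{a}^{k+1}-\mathbf{a}^k\|+\|\mathbf{b}^{k+1}-\mathbf{b}^k\|+\|\mathbf{W}^k-\mathbf{W}^{k-1}\|+\|\mathbf{b}^k-\mathbf{b}^{k-1}\|+\|\mathbf{z}^k-\mathbf{z}^{k-1}\|\big)$, where $\partial_{\mathbf{W}^{k+1}}F$ denotes the limiting subdifferential of $F$ with respect to $\mathbf{W}$ at $(\mathbf{W}^{k+1},\mathbf{z}^{k+1},\mathbf{a}^{k+1},\mathbf{b}^{k+1})$.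
   Context: Problem. Fix $L\ge 1$, dimensions $n_0=d,n_1,\dots,n_L$, an input $a_0=x\in\mathbb{R}^d$, a label vector $y$, and parameters $\rho>0$, $\epsilon>0$, $p_1,p_2,p_3\in[0,1)$. Variables: $\mathbf{W}=(W_l)_{l=1}^L$, $W_l\in\mathbb{R}^{n_l\times n_{l-1}}$; $\mathbf{b}=(b_l)_{l=1}^L$, $\mathbf{z}=(z_l)_{l=1}^L$ with $b_l,z_l\in\mathbb{R}^{n_l}$; $\mathbf{a}=(a_l)_{l=1}^{L-1}$, $a_l\in\mathbb{R}^{n_l}$. The activations $h_l$ are continuous (applied componentwise); the loss $z_L\mapsto R(z_L;y)$ and the regularizers $\Omega_l$ are continuous, convex and proper, with $\Omega_l\ge 0$. Norms are Euclidean/Frobenius. Let $\phi(a_{l-1},W_l,z_l,b_l)=\frac{\rho}{2}\|z_l-W_la_{l-1}-b_l\|^2$ and $F(\mathbf{W},\mathbf{z},\mathbf{a},\mathbf{b})=R(z_L;y)+\sum_{l=1}^L\Omega_l(W_l)+\sum_{l=1}^L\phi(a_{l-1},W_l,z_l,b_l)$. The subdifferential $\partial_{\mathbf{W}}F$ is the product $\partial_{W_1}F\times\cdots\times\partial_{W_L}F$. Algorithm (TIAM). Iterates $(\mathbf{W}^k,\mathbf{z}^k,\mathbf{a}^k,\mathbf{b}^k)$, $k=0,1,\dots$. In iteration $k\to k+1$, for $l=1,\dots,L$ in order, the blocks $W_l$, $b_l$, $z_l$ and (if $l<L$) $a_l$ are updated in this order. For a block $u$: $\tilde u^{k+1}=u^k+p_1(u^k-u^{k-1})$,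 $\hat u^{k+1}=u^k+p_2(u^k-u^{k-1})$, and after computing $u^{k+1}$, $\bar u^{k+1}=u^{k+1}+p_3(u^{k+1}-u^k)$. Updates: (W) $W_l^{k+1}\in\arg\min_{W_l}\langle\nabla_{W_l}\phi(\bar a_{l-1}^{k+1},\hat W_l^{k+1},\bar z_l^k,\bar b_l^k),W_l-\tilde W_l^{k+1}\rangle+\frac{\theta_l^{k+1}}{2}\|W_l-\tilde W_l^{k+1}\|^2+\Omega_l(W_l)$, with $\theta_l^{k+1}>0$ chosen by backtracking so that $\phi(\bar a_{l-1}^{k+1},\tilde W_l^{k+1},\bar z_l^k,\bar b_l^k)+\langle\nabla_{W_l}\phi(\bar a_{l-1}^{k+1},\hat W_l^{k+1},\bar z_l^k,\bar b_l^k),W_l^{k+1}-\tilde W_l^{k+1}\rangle+\frac{\theta_l^{k+1}}{2}\|W_l^{k+1}-\tilde W_l^{k+1}\|^2\ge\phi(a_{l-1}^{k+1},W_l^{k+1},z_l^k,b_l^k)$. (b) $b_l^{k+1}=\tilde b_l^{k+1}-\nabla_{b_l}\phi(\bar a_{l-1}^{k+1},\bar W_l^{k+1},\bar z_l^k,\hat b_l^{k+1})/\xi_l^{k+1}$, with $\xi_l^{k+1}>0$ chosen by backtracking so that the analogous linearized model with parameter $\xi_l^{k+1}$ at $b_l^{k+1}$ dominates $\phi(a_{l-1}^{k+1},W_l^{k+1},z_l^k,b_l^{k+1})$. (z) For $l<L$: $z_l^{k+1}\in\arg\min_{z_l}\langle\nabla_{z_l}\phi(\bar a_{l-1}^{k+1},\bar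 W_l^{k+1},\hat z_l^{k+1},\bar b_l^{k+1}),z_l-\tilde z_l^{k+1}\rangle+\frac{\rho}{2}\|z_l-\tilde z_l^{k+1}\|^2$ subject to $h_l(z_l)-\epsilon\le a_l^k\le h_l(z_l)+\epsilon$; for $l=L$ the same objective plus $R(z_L;y)$, unconstrained. (a) $a_l^{k+1}\in\arg\min_{a_l}\langle\nabla_{a_l}\phi(\hat a_l^{k+1},\bar W_{l+1}^k,\bar z_{l+1}^k,\bar b_{l+1}^k),a_l-\tilde a_l^{k+1}\rangle+\frac{\tau_l^{k+1}}{2}\|a_l-\tilde a_l^{k+1}\|^2$ subject to $h_l(\bar z_l^{k+1})-\epsilon\le a_l\le h_l(\bar z_l^{k+1})+\epsilon$, with $\tau_l^{k+1}>0$ chosen by backtracking so that the linearized model at $a_l^{k+1}$ dominates $\phi(a_l^{k+1},W_{l+1}^k,z_{l+1}^k,b_{l+1}^k)$. Safeguard: if after a block update the value of $F$ (blocks already updated in this iteration at new values, others at iteration-$k$ values) is not smaller than before that block update, the block update is recomputed without acceleration: $\tilde u^{k+1}=\hat u^{k+1}=u^k$ and all extrapolated (barred) quantities of the other blocks are replaced by their non-extrapolated current values. *)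

From mathcomp Require Import all_boot all_order all_algebra.
From mathcomp Require Import reals.
Set Implicit Arguments. Unset Strict Implicit. Unset Printing Implicit Defensive.
Import Order.TTheory GRing.Theory Num.Theory.
Local Open Scope ring_scope.

Section Geometry.
Variable R : realType.

Definition minner m p (A B : 'M[R]_(m, p)) : R := \sum_i \sum_j A i j * B i j.
Definition msq m p (A : 'M[R]_(m, p)) : R := minner A A.
Definition mnorm m p (A : 'M[R]_(m, p)) : R := Num.sqrt (msq A).

Definition mconv m p (xs : nat -> 'M[R]_(m, p)) (x : 'M[R]_(m, p)) : Prop :=
  forall e : R, 0 < e -> exists N : nat, forall k, (N <= k)%N -> mnorm (xs k - x) < e.
Definition rconv (us : nat -> R) (u : R) : Prop :=
  forall e : R, 0 < e -> exists N : nat, forall k, (N <= k)%N -> `|us k - u| < e.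

(* Frechet (regular) subdifferential: v \in \hat\partial f(x) iff
   liminf_{y -> x, y <> x} (f y - f x - <v, y - x>) / ||y - x|| >= 0 *)
Definition frechet_subgrad m p (f : 'M[R]_(m, p) -> R) (x v : 'M[R]_(m, p)) : Prop :=
  forall e : R, 0 < e -> exists2 d : R, 0 < d & forall y, mnorm (y - x) < d ->
    f y - f x - minner v (y - x) >= - (e * mnorm (y - x)).

Definition limiting_subgrad m p (f : 'M[R]_(m, p) -> R) (x v : 'M[R]_(m, p)) : Prop :=
  exists (xs vs : nat -> 'M[R]_(m, p)),
    [/\ mconv xs x, rconv (fun k => f (xs k)) (f x),
        forall k, frechet_subgrad f (xs k) (vs k) & mconv vs v].

Definition mconvex m p (f : 'M[R]_(m, p) -> R) : Prop :=
  forall (A B : 'M[R]_(m, p)) (t : R), 0 <= t <= 1 ->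
    f (t *: A + (1 - t) *: B) <= t * f A + (1 - t) * f B.

Definition mcontinuous m p (f : 'M[R]_(m, p) -> R) : Prop :=
  forall A, forall e : R, 0 < e -> exists2 d : R, 0 < d &
    forall B, mnorm (B - A) < d -> `|f B - f A| < e.

Definition rcontinuous (f : R -> R) : Prop :=
  forall a, forall e : R, 0 < e -> exists2 d : R, 0 < d &
    forall b, `|b - a| < d -> `|f b - f a| < e.

End Geometry.

Section Network.
Variable R : realType.
Variable n : nat -> nat.   (* n 0 = d, n 1, ..., n L *)

(* a full family of layer variables; only layers 1..L (resp. 1..L-1 for a) matter *)
Definition Wfam := forall l : nat, 'M[R]_(n l, n l.-1).
Definition Vfam := forall l : nat, 'cV[R]_(n l).

Record St := mkSt { sW : Wfam; sz : Vfam; sa : Vfam; sb : Vfam }.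

Variable L : nat.
Variable x : 'cV[R]_(n 0).                         (* a_0 = x *)
Variable rho eps p1 p2 p3 : R.
Variable h : nat -> R -> R.                        (* activation h_l, componentwise *)
Variable loss : 'cV[R]_(n L) -> R.
Variable Om : forall l : nat, 'M[R]_(n l, n l.-1) -> R.

Definition aa (a : Vfam) (l : nat) : 'cV[R]_(n l) :=
  match l as l0 return 'cV[R]_(n l0) with 0 => x | l'.+1 => a l'.+1 end.

Definition phi m p (a : 'cV[R]_p) (W : 'M[R]_(m, p)) (z b : 'cV[R]_m) : R :=
  rho / 2 * msq (z - W *m a - b).

Definition gradW m p (a : 'cV[R]_p) (W : 'M[R]_(m, p)) (z b : 'cV[R]_m) : 'M[R]_(m, p) :=
  - rho *: ((z - W *m a - b) *m a^T).
Definition gradb m p (a : 'cV[R]_p) (W : 'M[R]_(m, p)) (z b : 'cV[R]_m) : 'cV[R]_m :=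
  - rho *: (z - W *m a - b).
Definition gradz m p (a : 'cV[R]_p) (W : 'M[R]_(m, p)) (z b : 'cV[R]_m) : 'cV[R]_m :=
  rho *: (z - W *m a - b).
Definition grada m p (a : 'cV[R]_p) (W : 'M[R]_(m, p)) (z b : 'cV[R]_m) : 'cV[R]_p :=
  - rho *: (W^T *m (z - W *m a - b)).

Definition quad_dist m p (a a' : 'cV[R]_p) (W W' : 'M[R]_(m, p)) (z z' b b' : 'cV[R]_m) : R :=
  Num.sqrt (msq (a - a') + msq (W - W') + msq (z - z') + msq (b - b')).
Definition grad_dist m p (a a' : 'cV[R]_p) (W W' : 'M[R]_(m, p)) (z z' b b' : 'cV[R]_m) : R :=
  Num.sqrt (msq (grada a W z b - grada a' W' z' b') + msq (gradW a W z b - gradW a' W' z' b')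
          + msq (gradz a W z b - gradz a' W' z' b') + msq (gradb a W z b - gradb a' W' z' b')).

Definition Fobj (s : St) : R :=
  loss (sz s L) + \sum_(1 <= l < L.+1) Om (sW s l)
  + \sum_(1 <= l < L.+1) phi (aa (sa s) l.-1) (sW s l) (sz s l) (sb s l).

Definition feas (l : nat) m (z a : 'cV[R]_m) : Prop :=
  forall i, h l (z i 0) - eps <= a i 0 <= h l (z i 0) + eps.

Definition constraint_set : St -> Prop :=
  fun s => forall l, (1 <= l < L)%N -> feas l (sz s l) (sa s l).

Definition Wnorm (W : Wfam) : R := Num.sqrt (\sum_(1 <= l < L.+1) msq (W l)).
Definition Vnorm (v : Vfam) : R := Num.sqrt (\sum_(1 <= l < L.+1) msq (v l)).
Definition Anorm (a : Vfam) : R := Num.sqrt (\sum_(1 <= l < L) msq (a l)).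
Definition Wsub (W W' : Wfam) : Wfam := fun l => W l - W' l.
Definition Vsub (v v' : Vfam) : Vfam := fun l => v l - v' l.
Definition stnorm (s : St) : R :=
  Num.sqrt (Wnorm (sW s) ^+ 2 + Vnorm (sz s) ^+ 2 + Anorm (sa s) ^+ 2 + Vnorm (sb s) ^+ 2).

Definition coercive_on (F : St -> R) (S : St -> Prop) : Prop :=
  forall K : R, exists r : R, forall s, S s -> r <= stnorm s -> K <= F s.

Definition setW (W : Wfam) (l : nat) (V : 'M[R]_(n l, n l.-1)) : Wfam :=
  fun j => match l =P j with
           | ReflectT e => eq_rect l (fun i => 'M[R]_(n i, n i.-1)) V j e
           | ReflectF _ => W j end.

(* ---------- one TIAM iteration k -> k+1 ----------
   P, C, N are the states at iterations k-1, k, k+1. *)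

Definition ex m p (q : R) (u u' : 'M[R]_(m, p)) := u + q *: (u - u').

(* state in which the blocks at positions < t (in the update order
   W_1,b_1,z_1,a_1,W_2,...) have their new values and the others the old ones;
   position of W_l, b_l, z_l, a_l is 4l, 4l+1, 4l+2, 4l+3. *)
Definition mix (C N : St) (t : nat) : St :=
  mkSt (fun j => if (4 * j < t)%N then sW N j else sW C j)
       (fun j => if (4 * j + 2 < t)%N then sz N j else sz C j)
       (fun j => if (4 * j + 3 < t)%N then sa N j else sa C j)
       (fun j => if (4 * j + 1 < t)%N then sb N j else sb C j).

Section Blocks.
Variables (P C : St) (l : nat).
(* q1, q2, q3 are the extrapolation weights used: (p1,p2,p3) for the
   accelerated update, (0,0,0) for the safeguarded non-accelerated one *)
Variables (q1 q2 q3 : R).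

Definition Wupd (theta : R) (N : St) : Prop :=
  let Wt := ex q1 (sW C l) (sW P l) in
  let Wh := ex q2 (sW C l) (sW P l) in
  let ab := ex q3 (aa (sa N) l.-1) (aa (sa C) l.-1) in
  let zb := ex q3 (sz C l) (sz P l) in
  let bb := ex q3 (sb C l) (sb P l) in
  let G := gradW ab Wh zb bb in
  let obj V := minner G (V - Wt) + theta / 2 * msq (V - Wt) + Om V in
  [/\ 0 < theta,
      forall V, obj (sW N l) <= obj V &
      phi ab Wt zb bb + minner G (sW N l - Wt) + theta / 2 * msq (sW N l - Wt)
        >= phi (aa (sa N) l.-1) (sW N l) (sz C l) (sb C l)].

Definition bupd (xi : R) (N : St) : Prop :=
  let bt := ex q1 (sb C l) (sb P l) in
  let bh := ex q2 (sb C l) (sb P l) in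
  let ab := ex q3 (aa (sa N) l.-1) (aa (sa C) l.-1) in
  let Wb := ex q3 (sW N l) (sW C l) in
  let zb := ex q3 (sz C l) (sz P l) in
  let G := gradb ab Wb zb bh in
  [/\ 0 < xi,
      sb N l = bt - xi^-1 *: G &
      phi ab Wb zb bt + minner G (sb N l - bt) + xi / 2 * msq (sb N l - bt)
        >= phi (aa (sa N) l.-1) (sW N l) (sz C l) (sb N l)].

Definition zupd (N : St) : Prop :=
  let zt := ex q1 (sz C l) (sz P l) in
  let zh := ex q2 (sz C l) (sz P l) in
  let ab := ex q3 (aa (sa N) l.-1) (aa (sa C) l.-1) in
  let Wb := ex q3 (sW N l) (sW C l) in
  let bb := ex q3 (sb N l) (sb C l) in
  let G := gradz ab Wb zh bb in
  let obj v := minner G (v - zt) + rho / 2 * msq (v - zt) in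
  feas l (sz N l) (sa C l) /\
  (forall v, feas l v (sa C l) -> obj (sz N l) <= obj v).

Definition aupd (tau : R) (N : St) : Prop :=
  let at_ := ex q1 (sa C l) (sa P l) in
  let ah := ex q2 (sa C l) (sa P l) in
  let Wb := ex q3 (sW C l.+1) (sW P l.+1) in
  let zb := ex q3 (sz C l.+1) (sz P l.+1) in
  let bb := ex q3 (sb C l.+1) (sb P l.+1) in
  let zbn := ex q3 (sz N l) (sz C l) in
  let G := grada ah Wb zb bb in
  let obj v := minner G (v - at_) + tau / 2 * msq (v - at_) in
  [/\ 0 < tau, feas l zbn (sa N l),
      (forall v, feas l zbn v -> obj (sa N l) <= obj v) &
      phi at_ Wb zb bb + minner G (sa N l - at_) + tau / 2 * msq (sa N l - at_)
        >= phi (sa N l) (sW C l.+1) (sz C l.+1) (sb C l.+1)].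
End Blocks.

Definition zupdL (P C : St) (q1 q2 q3 : R) (N : St) : Prop :=
  let zt := ex q1 (sz C L) (sz P L) in
  let zh := ex q2 (sz C L) (sz P L) in
  let ab := ex q3 (aa (sa N) L.-1) (aa (sa C) L.-1) in
  let Wb := ex q3 (sW N L) (sW C L) in
  let bb := ex q3 (sb N L) (sb C L) in
  let G := gradz ab Wb zh bb in
  let obj v := minner G (v - zt) + rho / 2 * msq (v - zt) + loss v in
  forall v, obj (sz N L) <= obj v.

(* Either the accelerated update decreases F and is kept, or an accelerated
   candidate was computed, did not decrease F, and the final value is the
   non-accelerated update. *)
Definition safeguarded (C N : St) (t : nat)
    (acc : St -> Prop) (nonacc : St -> Prop) (acc_some : St -> Prop) : Prop :=
  (acc N /\ Fobj (mix C N t.+1) < Fobj (mix C N t)) \/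
  ((exists N' : St, [/\ mix C N' t = mix C N t, acc_some N' &
                       Fobj (mix C N t) <= Fobj (mix C N' t.+1)])
   /\ nonacc N).

(* one TIAM iteration; theta, xi, tau : layer -> step actually used *)
Definition tiam_step (P C N : St) (theta xi tau : nat -> R) : Prop :=
  [/\ forall l, (1 <= l <= L)%N ->
        safeguarded C N (4 * l)
          (Wupd P C l p1 p2 p3 (theta l)) (Wupd P C l 0 0 0 (theta l))
          (fun N' => exists th, Wupd P C l p1 p2 p3 th N'),
      forall l, (1 <= l <= L)%N ->
        safeguarded C N (4 * l + 1)
          (bupd P C l p1 p2 p3 (xi l)) (bupd P C l 0 0 0 (xi l))
          (fun N' => exists xi', bupd P C l p1 p2 p3 xi' N'),
      forall l, (1 <= l < L)%N ->
        safeguarded C N (4 * l + 2)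
          (zupd P C l p1 p2 p3) (zupd P C l 0 0 0) (zupd P C l p1 p2 p3),
      safeguarded C N (4 * L + 2)
          (zupdL P C p1 p2 p3) (zupdL P C 0 0 0) (zupdL P C p1 p2 p3) &
      forall l, (1 <= l < L)%N ->
        safeguarded C N (4 * l + 3)
          (aupd P C l p1 p2 p3 (tau l)) (aupd P C l 0 0 0 (tau l))
          (fun N' => exists ta, aupd P C l p1 p2 p3 ta N')].

(* iterates and their extrapolations of a block sequence u (u j = u^{j-1}) *)
Definition iter_pts m p (u : nat -> 'M[R]_(m, p)) (v : 'M[R]_(m, p)) : Prop :=
  exists j : nat, v = u j \/ exists2 q, q \in [:: p1; p2; p3] & v = ex q (u j.+1) (u j).

Definition bounded_set m p (S : 'M[R]_(m, p) -> Prop) : Prop :=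
  exists B : R, forall v, S v -> mnorm v <= B.

End Network.
Arguments setW : clear implicits.

From mathcomp Require Import all_boot all_order all_algebra reals.
From mathcomp Require Import ring lra.
From mathcomp Require Import boolp.
Set Implicit Arguments. Unset Strict Implicit. Unset Printing Implicit Defensive.
Import Order.TTheory GRing.Theory Num.Theory.
Local Open Scope ring_scope.

(* For each layer l, F is, as a function of W_l, the convex Omega_l plus the convex
   quadratic phi plus a constant.  The optimality condition of the prox-linear
   W_l-step therefore makes
     grad_W phi (a_(l-1)^(k+1), W_l^(k+1), z_l^(k+1), b_l^(k+1))
       - grad_W phi (extrapolated point) - theta_l (W_l^(k+1) - tilde W_l^(k+1))
   a global, hence limiting, subgradient of W_l |-> F at W_l^(k+1), whether or not
   the safeguard dropped the acceleration.  By the Lipschitz continuity of grad phi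
   its norm is at most M times the distance of the two points plus
   theta_l |W_l^(k+1) - tilde W_l^(k+1)|, and every extrapolation
   u^k + q (u^k - u^(k-1)) with q in [0, 1] lies within
   |u^(k+1) - u^k| + |u^k - u^(k-1)| of u^(k+1).  Minkowski's inequality over the
   layers assembles these layerwise bounds. *)

Section QuadraticForms.
Variable R : rcfType.
Implicit Types a b c : R.

Lemma discr_le a b c : 0 <= b -> (forall t, 0 <= a + 2 * t * c + t ^+ 2 * b) ->
  c <= Num.sqrt a * Num.sqrt b.
Proof.
move=> b0 H; have a0 : 0 <= a by have := H 0; rewrite !(mul0r, mulr0, expr0n) !addr0.
have c2 : c ^+ 2 <= a * b.
  have [b_eq0|b_neq0] := eqVneq b 0.
    have -> : c = 0.
      apply/eqP; apply: contraT => c_neq0.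
      have := H (- (a + 1) / (2 * c)).
      have -> : 2 * (- (a + 1) / (2 * c)) * c = - (a + 1) by field.
      by rewrite b_eq0 mulr0 addr0; lra.
    by rewrite expr0n /= mulr_ge0.
  have b_gt0 : 0 < b by rewrite lt_def b_neq0.
  have := H (- c / b).
  have -> : a + 2 * (- c / b) * c + (- c / b) ^+ 2 * b = a - c ^+ 2 / b by field.
  by rewrite subr_ge0 ler_pdivrMr.
by rewrite (le_trans (ler_norm c)) // -sqrtrM // -sqrtr_sqr ler_wsqrtr.
Qed.

Lemma sqrt_quad_le a b c : 0 <= b -> (forall t, 0 <= a + 2 * t * c + t ^+ 2 * b) ->
  Num.sqrt (a + 2 * c + b) <= Num.sqrt a + Num.sqrt b.
Proof.
move=> b0 H; have a0 : 0 <= a by have := H 0; rewrite !(mul0r, mulr0, expr0n) !addr0.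
have := discr_le b0 H => cab.
rewrite -[leRHS]ger0_norm ?addr_ge0 ?sqrtr_ge0 // -sqrtr_sqr ler_wsqrtr //.
by rewrite sqrrD !sqr_sqrtr // mulr2n; lra.
Qed.

Lemma sqrtD_le a b : 0 <= a -> 0 <= b -> Num.sqrt (a + b) <= Num.sqrt a + Num.sqrt b.
Proof.
move=> a0 b0; have := @sqrt_quad_le a b 0 b0; rewrite mulr0 addr0; apply=> t.
by rewrite mulr0 addr0 addr_ge0 // mulr_ge0 // sqr_ge0.
Qed.

Lemma ge0_slope c K : 0 <= K -> (forall t, 0 < t <= 1 -> 0 <= t * c + t ^+ 2 * K) -> 0 <= c.
Proof.
move=> K0 H; rewrite leNgt; apply/negP => c_lt0.
have d_gt0 : 0 < K + 1 - c by lra.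
pose t := - c / (K + 1 - c).
have t_gt0 : 0 < t by rewrite divr_gt0 //; lra.
have t_le1 : t <= 1 by rewrite ler_pdivrMr //; lra.
have := H t; rewrite t_gt0 t_le1 expr2 -mulrA -mulrDr pmulr_rge0 // => /(_ isT).
have -> : c + t * K = c * (1 - c) / (K + 1 - c) by rewrite /t; field; lra.
by rewrite pmulr_lge0 ?invr_gt0 //; nra.
Qed.

End QuadraticForms.

Section L2Norm.
Variables (R : rcfType) (I : eqType) (r : seq I).
Implicit Types f g : I -> R.

Definition l2norm f : R := Num.sqrt (\sum_(j <- r) f j ^+ 2).

Lemma l2normD f g : l2norm (fun j => f j + g j) <= l2norm f + l2norm g.
Proof.
rewrite /l2norm; have -> : \sum_(j <- r) (f j + g j) ^+ 2 =
    \sum_(j <- r) f j ^+ 2 + 2 * \sum_(j <- r) f j * g j + \sum_(j <- r) g j ^+ 2.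
  by rewrite mulr_sumr -!big_split; apply: eq_bigr => j _ /=; ring.
apply: sqrt_quad_le => [|t]; first by apply: sumr_ge0 => j _; exact: sqr_ge0.
have -> : \sum_(j <- r) f j ^+ 2 + 2 * t * \sum_(j <- r) f j * g j +
    t ^+ 2 * \sum_(j <- r) g j ^+ 2 = \sum_(j <- r) (f j + t * g j) ^+ 2.
  by rewrite !mulr_sumr -!big_split; apply: eq_bigr => j _ /=; ring.
by apply: sumr_ge0 => j _; exact: sqr_ge0.
Qed.

Lemma l2normZ c f : 0 <= c -> l2norm (fun j => c * f j) = c * l2norm f.
Proof.
move=> c0; rewrite /l2norm.
under eq_bigr => j _ do rewrite exprMn.
by rewrite -mulr_sumr sqrtrM ?sqr_ge0 // sqrtr_sqr ger0_norm.
Qed.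

Lemma ler_l2norm f g : (forall j, j \in r -> 0 <= f j <= g j) -> l2norm f <= l2norm g.
Proof.
move=> fg; apply: ler_wsqrtr; rewrite big_seq [leRHS]big_seq.
apply: ler_sum => j /fg /andP[f0 fg_j].
by rewrite ler_sqr ?nnegrE ?(le_trans f0).
Qed.

End L2Norm.

Section Frobenius.
Variables (R : realType) (m p : nat).
Implicit Types A B C : 'M[R]_(m, p).

Lemma minnerC A B : minner A B = minner B A.
Proof. by apply: eq_bigr => i _; apply: eq_bigr => j _; rewrite mulrC. Qed.

Lemma minnerDl A B C : minner (A + B) C = minner A C + minner B C.
Proof.
rewrite /minner -big_split; apply: eq_bigr => i _.
by rewrite -big_split; apply: eq_bigr => j _; rewrite mxE mulrDl.
Qed.

Lemma minnerZl c A B : minner (c *: A) B = c * minner A B.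
Proof.
rewrite /minner mulr_sumr; apply: eq_bigr => i _.
by rewrite mulr_sumr; apply: eq_bigr => j _; rewrite mxE mulrA.
Qed.

Lemma minnerNl A B : minner (- A) B = - minner A B.
Proof. by rewrite -scaleN1r minnerZl mulN1r. Qed.

Lemma minnerBl A B C : minner (A - B) C = minner A C - minner B C.
Proof. by rewrite minnerDl minnerNl. Qed.

Lemma minnerDr A B C : minner A (B + C) = minner A B + minner A C.
Proof. by rewrite minnerC minnerDl !(minnerC A). Qed.

Lemma minnerZr c A B : minner A (c *: B) = c * minner A B.
Proof. by rewrite minnerC minnerZl minnerC. Qed.

Lemma minnerNr A B : minner A (- B) = - minner A B.
Proof. by rewrite minnerC minnerNl minnerC. Qed.

Lemma msqD A B : msq (A + B) = msq A + 2 * minner A B + msq B.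
Proof. by rewrite /msq minnerDl !minnerDr (minnerC B A); ring. Qed.

Lemma msqZ c A : msq (c *: A) = c ^+ 2 * msq A.
Proof. by rewrite /msq minnerZl minnerZr mulrA expr2. Qed.

Lemma msq_ge0 A : 0 <= msq A.
Proof. by apply: sumr_ge0 => i _; apply: sumr_ge0 => j _; rewrite -expr2 sqr_ge0. Qed.

Lemma mnorm_ge0 A : 0 <= mnorm A.
Proof. exact: sqrtr_ge0. Qed.

Lemma sqr_mnorm A : mnorm A ^+ 2 = msq A.
Proof. by rewrite sqr_sqrtr // msq_ge0. Qed.

Lemma mnormZ c A : mnorm (c *: A) = `|c| * mnorm A.
Proof. by rewrite /mnorm msqZ sqrtrM ?sqr_ge0 // sqrtr_sqr. Qed.

Lemma mnorm0 : mnorm (0 : 'M[R]_(m, p)) = 0.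
Proof. by rewrite -(scale0r 0) mnormZ normr0 mul0r. Qed.

Lemma mnormD A B : mnorm (A + B) <= mnorm A + mnorm B.
Proof.
rewrite /mnorm msqD; apply: sqrt_quad_le; rewrite ?msq_ge0 // => t.
by have := msq_ge0 (A + t *: B); rewrite msqD minnerZr msqZ mulrA.
Qed.

Lemma mnormB A B : mnorm (A - B) <= mnorm A + mnorm B.
Proof. by rewrite -[mnorm B]mul1r -normrN1 -mnormZ scaleN1r mnormD. Qed.

End Frobenius.

Lemma minner_mulmx_tr (R : realType) m p q (A : 'M[R]_(m, q)) (B : 'M[R]_(p, q))
    (C : 'M[R]_(m, p)) :
  minner (A *m B^T) C = minner A (C *m B).
Proof.
rewrite /minner; apply: eq_bigr => i _.
under eq_bigr => j _ do rewrite mxE mulr_suml.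
rewrite exchange_big; apply: eq_bigr => k _.
by rewrite mxE mulr_sumr; apply: eq_bigr => j _; rewrite !mxE; ring.
Qed.

Section Subgradients.
Variables (R : realType) (m p : nat).
Implicit Types (f : 'M[R]_(m, p) -> R) (A G V W Wt : 'M[R]_(m, p)).

Lemma prox_linear_subgrad f G Wt W (th : R) : mconvex f -> 0 <= th ->
  (forall V, minner G (W - Wt) + th / 2 * msq (W - Wt) + f W <=
             minner G (V - Wt) + th / 2 * msq (V - Wt) + f V) ->
  forall V, minner (- (G + th *: (W - Wt))) (V - W) <= f V - f W.
Proof.
move=> fconv th0 opt V; rewrite minnerNl -subr_ge0 opprK.
apply: (@ge0_slope _ _ (th / 2 * msq (V - W))); first by rewrite mulr_ge0 ?divr_ge0 ?msq_ge0.
move=> t /andP[t_gt0 t_le1].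
have := fconv V W t; rewrite (ltW t_gt0) t_le1 => /(_ isT) conv.
have := opt (t *: V + (1 - t) *: W).
have -> : t *: V + (1 - t) *: W - Wt = (W - Wt) + t *: (V - W).
  by apply/matrixP => i j; rewrite !mxE; ring.
rewrite [minner G (_ + t *: _)]minnerDr [msq (_ + t *: _)]msqD !minnerZr msqZ.
rewrite [minner (G + _) _]minnerDl minnerZl => opt_t.
nra.
Qed.

Lemma global_subgrad_limiting f W A : (forall V, minner A (V - W) <= f V - f W) ->
  limiting_subgrad f W A.
Proof.
move=> subgrad; exists (fun _ => W), (fun _ => A); split.
- by move=> e e0; exists 0%N => k _; rewrite subrr mnorm0.
- by move=> e e0; exists 0%N => k _; rewrite subrr normr0.
- move=> k e e0; exists 1 => // V _.
  have := subgrad V; have := mnorm_ge0 (V - W); nra.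
- by move=> e e0; exists 0%N => k _; rewrite subrr mnorm0.
Qed.

End Subgradients.

Section Coupling.
Variables (R : realType) (rho : R) (m p : nat).
Implicit Types (a : 'cV[R]_p) (V W : 'M[R]_(m, p)) (z b : 'cV[R]_m).

Lemma phi_subW a V W z b :
  phi rho a V z b - phi rho a W z b =
  minner (gradW rho a W z b) (V - W) + rho / 2 * msq ((V - W) *m a).
Proof.
rewrite /phi /gradW.
have -> : z - V *m a - b = (z - W *m a - b) - (V - W) *m a.
  by rewrite mulmxBl; apply/matrixP => i j; rewrite !mxE; ring.
rewrite msqD minnerZl minner_mulmx_tr minnerNr /msq minnerNl minnerNr opprK.
by field.
Qed.

Lemma gradW_subgrad a V W z b : 0 <= rho ->
  minner (gradW rho a W z b) (V - W) <= phi rho a V z b - phi rho a W z b.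
Proof. by move=> rho0; rewrite phi_subW lerDl mulr_ge0 ?divr_ge0 ?msq_ge0. Qed.

Lemma mnorm_gradW_sub a a' V W z z' b b' :
  mnorm (gradW rho a V z b - gradW rho a' W z' b') <= grad_dist rho a a' V W z z' b b'.
Proof.
apply: ler_wsqrtr; rewrite [X in _ <= X + _ + _]addrC -!addrA lerDl.
by rewrite !addr_ge0 ?msq_ge0.
Qed.

Lemma quad_dist_le a a' V W z z' b b' :
  quad_dist a a' V W z z' b b' <=
  mnorm (a - a') + mnorm (V - W) + mnorm (z - z') + mnorm (b - b').
Proof.
rewrite /quad_dist /mnorm.
by do 3 (apply: le_trans (sqrtD_le _ _) _; rewrite ?addr_ge0 ?msq_ge0 // lerD2r).
Qed.

End Coupling.

Lemma ex0 (R : realType) m p (u v : 'M[R]_(m, p)) : ex 0 u v = u.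
Proof. by rewrite /ex scale0r addr0. Qed.

Lemma mnorm_sub_ex (R : realType) m p (q : R) (u v w : 'M[R]_(m, p)) : 0 <= q <= 1 ->
  mnorm (u - ex q v w) <= mnorm (u - v) + mnorm (v - w).
Proof.
move=> /andP[q0 q1].
have -> : u - ex q v w = (u - v) - q *: (v - w).
  by rewrite /ex; apply/matrixP => i j; rewrite !mxE; ring.
apply: le_trans (mnormB _ _) _; rewrite lerD2l mnormZ ger0_norm //.
by rewrite ler_piMl ?mnorm_ge0.
Qed.

Lemma mnorm_W_residual (R : realType) (rho M th q1 q2 q3 : R) m p (an ac : 'cV[R]_p)
    (Wn Wc Wp : 'M[R]_(m, p)) (zn zc zp bn bc bp : 'cV[R]_m) :
  0 <= q1 <= 1 -> 0 <= q2 <= 1 -> 0 <= q3 <= 1 -> 0 <= M -> 0 <= th ->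
  grad_dist rho an (ex q3 an ac) Wn (ex q2 Wc Wp) zn (ex q3 zc zp) bn (ex q3 bc bp)
    <= M * quad_dist an (ex q3 an ac) Wn (ex q2 Wc Wp) zn (ex q3 zc zp) bn (ex q3 bc bp) ->
  mnorm (gradW rho an Wn zn bn
         - (gradW rho (ex q3 an ac) (ex q2 Wc Wp) (ex q3 zc zp) (ex q3 bc bp)
            + th *: (Wn - ex q1 Wc Wp)))
  <= (M + th) * (mnorm (Wn - Wc) + mnorm (zn - zc) + mnorm (an - ac) + mnorm (bn - bc)
                 + mnorm (Wc - Wp) + mnorm (bc - bp) + mnorm (zc - zp)).
Proof.
move=> q1b q2b q3b M0 th0 lip; set s := (X in _ <= _ * X).
have quad_le : quad_dist an (ex q3 an ac) Wn (ex q2 Wc Wp) zn (ex q3 zc zp) bn (ex q3 bc bp) <= s.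
  apply: le_trans (quad_dist_le _ _ _ _ _ _ _ _) _.
  have := mnorm_sub_ex an an ac q3b; rewrite subrr mnorm0 add0r.
  have := mnorm_sub_ex Wn Wc Wp q2b; have := mnorm_sub_ex zn zc zp q3b.
  have := mnorm_sub_ex bn bc bp q3b; rewrite /s; lra.
have step_le : mnorm (Wn - ex q1 Wc Wp) <= s.
  have := mnorm_sub_ex Wn Wc Wp q1b; move: (mnorm_ge0 (zn - zc)) (mnorm_ge0 (an - ac)).
  move: (mnorm_ge0 (bn - bc)) (mnorm_ge0 (bc - bp)) (mnorm_ge0 (zc - zp)); rewrite /s; lra.
rewrite opprD addrA mulrDl; apply: le_trans (mnormB _ _) _; rewrite mnormZ ger0_norm //.
apply: lerD; last exact: ler_wpM2l.
by apply: le_trans (mnorm_gradW_sub _ _ _ _ _ _ _ _ _) (le_trans lip (ler_wpM2l M0 quad_le)).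
Qed.

Section BlockFamilies.
Variables (R : realType) (n : nat -> nat).

Lemma setW_same (W : Wfam R n) l V : setW R n W l V l = V.
Proof. by rewrite /setW; case: (l =P l) => // e; rewrite (eq_axiomK e). Qed.

Lemma setW_other (W : Wfam R n) l V j : j != l -> setW R n W l V j = W j.
Proof. by move=> jl; rewrite /setW; case: (l =P j) => // e; rewrite e eqxx in jl. Qed.

Lemma Wfam_choice (P : forall l, 'M[R]_(n l, n l.-1) -> Prop) :
  (forall l, exists g, P l g) -> exists g : Wfam R n, forall l, P l (g l).
Proof.
by move=> exP; exists (fun l => sval (cid (exP l))) => l; exact: svalP (cid (exP l)).
Qed.

End BlockFamilies.

Section TIAMWStep.
Variables (R : realType) (n : nat -> nat) (L : nat) (x : 'cV[R]_(n 0)).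
Variables (rho eps p1 p2 p3 : R) (h : nat -> R -> R) (loss : 'cV[R]_(n L) -> R).
Variable Om : forall l : nat, 'M[R]_(n l, n l.-1) -> R.
Arguments Om : clear implicits.

Local Notation F := (Fobj x rho loss Om).
Local Notation aa := (aa x).

Lemma Fobj_setW (W : Wfam R n) (z a b : Vfam R n) l V : (1 <= l <= L)%N ->
  F (mkSt (setW R n W l V) z a b) =
  Om l V + phi rho (aa a l.-1) V (z l) (b l) +
  (loss (z L) + \sum_(j <- index_iota 1 L.+1 | j != l)
                  (Om j (W j) + phi rho (aa a j.-1) (W j) (z j) (b j))).
Proof.
move=> hl; rewrite /Fobj /= -addrA -big_split /=.
rewrite (bigD1_seq l) ?mem_index_iota ?iota_uniq //= setW_same addrCA.
by congr (_ + (_ + _)); apply: eq_bigr => j jl; rewrite !setW_other.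
Qed.

Definition W_residual (P C N : St R n) l (q1 q2 q3 th : R) : 'M[R]_(n l, n l.-1) :=
  gradW rho (aa (sa N) l.-1) (sW N l) (sz N l) (sb N l)
  - (gradW rho (ex q3 (aa (sa N) l.-1) (aa (sa C) l.-1)) (ex q2 (sW C l) (sW P l))
           (ex q3 (sz C l) (sz P l)) (ex q3 (sb C l) (sb P l))
     + th *: (sW N l - ex q1 (sW C l) (sW P l))).

Lemma Wupd_limiting_subgrad P C N l q1 q2 q3 th :
  (1 <= l <= L)%N -> 0 <= rho -> mconvex (Om l) -> Wupd x rho Om P C l q1 q2 q3 th N ->
  limiting_subgrad (fun V => F (mkSt (setW R n (sW N) l V) (sz N) (sa N) (sb N)))
    (sW N l) (W_residual P C N l q1 q2 q3 th).
Proof.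
move=> hl rho0 conv [th_gt0 opt _]; apply: global_subgrad_limiting => V.
rewrite !Fobj_setW // /W_residual minnerBl.
have := prox_linear_subgrad conv (ltW th_gt0) opt V; rewrite minnerNl.
have := gradW_subgrad (aa (sa N) l.-1) V (sW N l) (sz N l) (sb N l) rho0.
lra.
Qed.

Definition layer_moves (P C N : St R n) l : R :=
  mnorm (sW N l - sW C l) + mnorm (sz N l - sz C l)
  + mnorm (aa (sa N) l.-1 - aa (sa C) l.-1) + mnorm (sb N l - sb C l)
  + mnorm (sW C l - sW P l) + mnorm (sb C l - sb P l) + mnorm (sz C l - sz P l).

(* [b] tells whether the safeguard kept the accelerated step: [p *+ false = 0]. *)
Lemma tiam_step_Wupd P C N theta xi tau l :
  tiam_step x rho eps p1 p2 p3 h loss Om P C N theta xi tau -> (1 <= l <= L)%N ->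
  exists b : bool, Wupd x rho Om P C l (p1 *+ b) (p2 *+ b) (p3 *+ b) (theta l) N.
Proof.
by case=> Wsafe _ _ _ _ /Wsafe [[upd _]|[_ upd]]; [exists true | exists false].
Qed.

Lemma iter_pts_at m p (u : nat -> 'M[R]_(m, p)) j : iter_pts p1 p2 p3 u (u j).
Proof. by exists j; left. Qed.

Lemma iter_pts_ex m p (u : nat -> 'M[R]_(m, p)) j q (b : bool) :
  q \in [:: p1; p2; p3] -> iter_pts p1 p2 p3 u (ex (q *+ b) (u j.+1) (u j)).
Proof. by case: b => qp; [exists j; right; exists q | exists j.+1; left; rewrite ex0]. Qed.

Definition grad_lipschitz_along (S : nat -> St R n) l (M : R) : Prop :=
  forall a a' W W' z z' b b',
    iter_pts p1 p2 p3 (fun j => aa (sa (S j)) l.-1) a ->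
    iter_pts p1 p2 p3 (fun j => aa (sa (S j)) l.-1) a' ->
    iter_pts p1 p2 p3 (fun j => sW (S j) l) W ->
    iter_pts p1 p2 p3 (fun j => sW (S j) l) W' ->
    iter_pts p1 p2 p3 (fun j => sz (S j) l) z ->
    iter_pts p1 p2 p3 (fun j => sz (S j) l) z' ->
    iter_pts p1 p2 p3 (fun j => sb (S j) l) b ->
    iter_pts p1 p2 p3 (fun j => sb (S j) l) b' ->
    grad_dist rho a a' W W' z z' b b' <= M * quad_dist a a' W W' z z' b b'.

Lemma tiam_W_subgrad (S : nat -> St R n) theta xi tau k l M :
  0 <= rho -> 0 <= p1 < 1 -> 0 <= p2 < 1 -> 0 <= p3 < 1 -> 0 <= M ->
  (1 <= l <= L)%N -> mconvex (Om l) ->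
  tiam_step x rho eps p1 p2 p3 h loss Om (S k) (S k.+1) (S k.+2) theta xi tau ->
  grad_lipschitz_along S l M ->
  exists2 g, limiting_subgrad
               (fun V => F (mkSt (setW R n (sW (S k.+2)) l V) (sz (S k.+2)) (sa (S k.+2))
                                 (sb (S k.+2))))
               (sW (S k.+2) l) g
           & mnorm g <= (M + theta l) * layer_moves (S k) (S k.+1) (S k.+2) l.
Proof.
move=> rho0 p1b p2b p3b M0 hl conv step lip.
have [b upd] := tiam_step_Wupd step hl.
exists (W_residual (S k) (S k.+1) (S k.+2) l (p1 *+ b) (p2 *+ b) (p3 *+ b) (theta l)).
  exact: Wupd_limiting_subgrad upd.
have unit q : 0 <= q < 1 -> 0 <= q *+ b <= 1.
  by case/andP=> q0 /ltW q1; case: (b); rewrite /= ?q0 ?q1 ?lexx ?ler01.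
case: upd => th_gt0 _ _.
apply: mnorm_W_residual; rewrite ?unit ?(ltW th_gt0) //.
by apply: lip; by [apply: iter_pts_at | apply: iter_pts_ex; rewrite !inE eqxx ?orbT].
Qed.

End TIAMWStep.

Section BlockNorms.
Variables (R : realType) (n : nat -> nat) (L : nat) (x : 'cV[R]_(n 0)).
Local Notation layers := (index_iota 1 L.+1).

Lemma Wnorm_l2norm (W : Wfam R n) : Wnorm L W = l2norm layers (fun l => mnorm (W l)).
Proof. by rewrite /l2norm; under eq_bigr => l _ do rewrite sqr_mnorm. Qed.

Lemma Vnorm_l2norm (v : Vfam R n) : Vnorm L v = l2norm layers (fun l => mnorm (v l)).
Proof. by rewrite /l2norm; under eq_bigr => l _ do rewrite sqr_mnorm. Qed.

Lemma Anorm_l2norm (a a' : Vfam R n) : (1 <= L)%N ->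
  Anorm L (Vsub a a') = l2norm layers (fun l => mnorm (aa x a l.-1 - aa x a' l.-1)).
Proof.
case: L => // L' _; rewrite /Anorm /l2norm [in RHS]big_add1 [in RHS]big_nat_recl //=.
rewrite subrr mnorm0 expr0n add0r big_add1.
by under [in RHS]eq_bigr => l _ do rewrite sqr_mnorm.
Qed.

Lemma layer_moves_ge0 (P C N : St R n) l : 0 <= layer_moves x P C N l.
Proof. by rewrite /layer_moves !addr_ge0 ?mnorm_ge0. Qed.

Lemma l2norm_layer_moves (P C N : St R n) : (1 <= L)%N ->
  l2norm layers (layer_moves x P C N) <=
  Wnorm L (Wsub (sW N) (sW C)) + Vnorm L (Vsub (sz N) (sz C))
  + Anorm L (Vsub (sa N) (sa C)) + Vnorm L (Vsub (sb N) (sb C))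
  + Wnorm L (Wsub (sW C) (sW P)) + Vnorm L (Vsub (sb C) (sb P))
  + Vnorm L (Vsub (sz C) (sz P)).
Proof.
move=> L_ge1; rewrite !Wnorm_l2norm !Vnorm_l2norm Anorm_l2norm // /layer_moves.
by do 6 (apply: le_trans (l2normD _ _ _) _; rewrite lerD2r).
Qed.

End BlockNorms.

Unset Implicit Arguments.

(* S k = (W^(k-1), z^(k-1), a^(k-1), b^(k-1)); so S 0 is the (arbitrary)
   state W^(-1) and S 1 the initial point W^0.  theta k l, xi k l, tau k l
   are the steps used in iteration k -> k+1 (i.e. theta_l^(k+1) etc.). *)
Theorem lemma4 (R : realType) (n : nat -> nat) (L : nat)
  (x : 'cV[R]_(n 0)) (rho eps p1 p2 p3 : R)
  (h : nat -> R -> R) (loss : 'cV[R]_(n L) -> R)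
  (Om : forall l : nat, 'M[R]_(n l, n l.-1) -> R)
  (S : nat -> St R n) (theta xi tau : nat -> nat -> R) (M : R) :
  (1 <= L)%N -> 0 < rho -> 0 < eps ->
  0 <= p1 < 1 -> 0 <= p2 < 1 -> 0 <= p3 < 1 ->
  (forall l, rcontinuous (h l)) ->
  mcontinuous loss -> mconvex loss ->
  (forall l, (1 <= l <= L)%N ->
     [/\ mcontinuous (Om l), mconvex (Om l) & forall W, 0 <= Om l W]) ->
  (* F coercive over the constraint set *)
  coercive_on L (Fobj x rho loss Om) (constraint_set L eps h) ->
  (* the sequence is generated by TIAM *)
  (forall k, tiam_step x rho eps p1 p2 p3 h loss Om
               (S k) (S k.+1) (S k.+2) (theta k) (xi k) (tau k)) ->
  (* M > 0 is a Lipschitz constant of grad phi_l on a bounded set containing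
     all iterates and their extrapolations *)
  0 < M ->
  (forall l, (1 <= l <= L)%N ->
     [/\ bounded_set (iter_pts p1 p2 p3 (fun j => aa x (sa (S j)) l.-1)),
         bounded_set (iter_pts p1 p2 p3 (fun j => sW (S j) l)),
         bounded_set (iter_pts p1 p2 p3 (fun j => sz (S j) l)),
         bounded_set (iter_pts p1 p2 p3 (fun j => sb (S j) l)) &
       forall a a' W W' z z' b b',
         iter_pts p1 p2 p3 (fun j => aa x (sa (S j)) l.-1) a ->
         iter_pts p1 p2 p3 (fun j => aa x (sa (S j)) l.-1) a' ->
         iter_pts p1 p2 p3 (fun j => sW (S j) l) W ->
         iter_pts p1 p2 p3 (fun j => sW (S j) l) W' ->
         iter_pts p1 p2 p3 (fun j => sz (S j) l) z ->
         iter_pts p1 p2 p3 (fun j => sz (S j) l) z' ->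
         iter_pts p1 p2 p3 (fun j => sb (S j) l) b ->
         iter_pts p1 p2 p3 (fun j => sb (S j) l) b' ->
         grad_dist rho a a' W W' z z' b b' <= M * quad_dist a a' W W' z z' b b']) ->
  forall k : nat,
    let N := S k.+2 in let C := S k.+1 in let P := S k in
    let C1 := \big[Num.max/M]_(1 <= l < L.+1) (M + theta k l) in
    exists g : Wfam R n,
      (forall l, (1 <= l <= L)%N ->
         limiting_subgrad
           (fun V => Fobj x rho loss Om (mkSt (setW R n (sW N) l V) (sz N) (sa N) (sb N)))
           (sW N l) (g l)) /\
      Wnorm L g <=
        C1 * (Wnorm L (Wsub (sW N) (sW C)) + Vnorm L (Vsub (sz N) (sz C))
              + Anorm L (Vsub (sa N) (sa C)) + Vnorm L (Vsub (sb N) (sb C))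
              + Wnorm L (Wsub (sW C) (sW P)) + Vnorm L (Vsub (sb C) (sb P))
              + Vnorm L (Vsub (sz C) (sz P))).
Proof.
move=> L_ge1 rho_gt0 _ p1b p2b p3b _ _ _ Om_hyp _ step M_gt0 lip k N C P C1.
have layer l : exists g, (1 <= l <= L)%N ->
    limiting_subgrad
      (fun V => Fobj x rho loss Om (mkSt (setW R n (sW N) l V) (sz N) (sa N) (sb N)))
      (sW N l) g /\ mnorm g <= (M + theta k l) * layer_moves x P C N l.
  have [hl|] := boolP (1 <= l <= L)%N; last by exists 0.
  have [_ conv _] := Om_hyp l hl; have [_ _ _ _ lip_l] := lip l hl.
  have [g g_sub g_le] :=
    tiam_W_subgrad (ltW rho_gt0) p1b p2b p3b (ltW M_gt0) hl conv (step k) lip_l.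
  by exists g.
have [g hg] := Wfam_choice layer.
exists g; split=> [l /hg[]//|].
have C1_ge l : (1 <= l <= L)%N -> M + theta k l <= C1.
  move=> hl; apply: (le_bigmax_seq _ _ xpredT (fun l => M + theta k l)) => //.
  by rewrite mem_index_iota.
have C1_ge0 : 0 <= C1 := le_trans (ltW M_gt0) (bigmax_ge_id _ _ _ _).
rewrite Wnorm_l2norm.
apply: (@le_trans _ _ (l2norm (index_iota 1 L.+1) (fun l => C1 * layer_moves x P C N l))).
  apply: ler_l2norm => l; rewrite mem_index_iota ltnS => hl; rewrite mnorm_ge0 /=.
  have [_ g_le] := hg l hl.
  by rewrite (le_trans g_le) // ler_wpM2r ?layer_moves_ge0 ?C1_ge.
by rewrite l2normZ // ler_wpM2l // l2norm_layer_moves.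
Qed.
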